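(* Let $\Gamma$ be a Veldkamp $n$-gon ($n\ge2$), let $x,y$ be opposite vertices of $\Gamma$ and let $z\in\Gamma_y$. Then there exists a unique root $(x,\dots,z,y)$ from $x$ to $y$ whose penultimate vertex is $z$.
   Context: A graph is a pair $(V,E)$ with $E$ a set of $2$-element subsets of $V$; $\Gamma_v$ is the set of neighbors of $v$. An $s$-path is a sequence $(x_0,\dots,x_s)$ of vertices with consecutive vertices adjacent and $x_{i-2}\ne x_i$ for $i\in[2,s]$. A closed $s$-path is an $s$-path with $s\ge3$ whose first and last vertices coincide; an $s$-circuit is the subgraph determined by a closed $s$-path. An opposition relation on a set $X$ is a symmetric anti-reflexive relation; it is $k$-plump if for every $S\subseteq X$ with $|S|\le k$ some element of $X$ is related to all elements of $S$. A Veldkamp graph is a graph with a $2$-plump opposition relation $\equiv_v$ on $\Gamma_v$ for each vertex $v$. A path $(v_0,\dots,v_s)$ is straight if $v_{i-1}\equiv_{v_i}v_{i+1}$ for all $i\in[1,s-1]$; a circuit is straight if every path in it is straight. A Veldkamp $n$-gon ($n\ge2$) is a Veldkamp graph satisfying (VP1) connected and bipartite; (VP2) for each $k\in[1,n-1]$ each straight $k$-path is the unique straight path between its endpoints of length at most $k$; (VP3) every straight $(n+1)$-path lies in a straight $2n$-circuit. A root is a straight $n$-path; two vertices $x,y$ are opposite if there is a root from $x$ to $y$. *)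

From Stdlib Require Import List Arith Relations.
Import ListNotations.

Definition last_error {A : Type} (l : list A) : option A :=
  match l with [] => None | a :: t => Some (last t a) end.

Section Veldkamp.
Variable V : Type.
Variable adj : V -> V -> Prop.
Variable opp : V -> V -> V -> Prop.          (* opp v a b : a ≡_v b *)

(* (V,E) with E a set of 2-element subsets: symmetric irreflexive adjacency *)
Definition is_graph : Prop :=
  (forall x y, adj x y -> adj y x) /\ (forall x, ~ adj x x).

Definition opposition_on (v : V) : Prop :=
  (forall a b, opp v a b -> adj v a /\ adj v b) /\
  (forall a b, opp v a b -> opp v b a) /\
  (forall a, ~ opp v a a).

Definition plump (k : nat) (v : V) : Prop :=
  forall S : list V, length S <= k -> (forall s, In s S -> adj v s) ->
    exists c, adj v c /\ forall s, In s S -> opp v c s.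

Definition veldkamp_graph : Prop :=
  is_graph /\ forall v, opposition_on v /\ plump 2 v.

(* Paths are lists [x_0; ...; x_s] *)
Fixpoint chain_in (E : V -> V -> Prop) (l : list V) : Prop :=
  match l with
  | x :: ((y :: _) as t) => E x y /\ chain_in E t
  | _ => True
  end.

Fixpoint no_backtrack (l : list V) : Prop :=
  match l with
  | x :: ((y :: z :: _) as t) => x <> z /\ no_backtrack t
  | _ => True
  end.

Fixpoint straight_seq (l : list V) : Prop :=
  match l with
  | x :: ((y :: z :: _) as t) => opp y x z /\ straight_seq t
  | _ => True
  end.

Definition path_in (P : V -> Prop) (E : V -> V -> Prop) (s : nat) (l : list V) : Prop :=
  length l = S s /\ (forall x, In x l -> P x) /\ chain_in E l /\ no_backtrack l.

Definition path (s : nat) (l : list V) : Prop := path_in (fun _ => True) adj s l.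

Definition straight_path (s : nat) (l : list V) : Prop := path s l /\ straight_seq l.

Definition closed_path (s : nat) (l : list V) : Prop :=
  3 <= s /\ path s l /\ hd_error l = last_error l.

(* the subgraph (circuit) determined by a closed path c *)
Definition circ_vert (c : list V) (x : V) : Prop := In x c.
Definition circ_edge (c : list V) (x y : V) : Prop :=
  exists i, S i < length c /\
    ((nth_error c i = Some x /\ nth_error c (S i) = Some y) \/
     (nth_error c i = Some y /\ nth_error c (S i) = Some x)).

Definition straight_circuit (s : nat) (c : list V) : Prop :=
  closed_path s c /\
  forall k l, path_in (circ_vert c) (circ_edge c) k l -> straight_seq l.

Definition connected : Prop := forall x y, clos_refl_trans V adj x y.
Definition bipartite : Prop := exists col : V -> bool, forall x y, adj x y -> col x <> col y.

Definition veldkamp_ngon (n : nat) : Prop :=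
  2 <= n /\ veldkamp_graph /\
  (* VP1 *) connected /\ bipartite /\
  (* VP2 *) (forall k, 1 <= k <= n - 1 -> forall p, straight_path k p ->
               forall j q, j <= k -> straight_path j q ->
               hd_error q = hd_error p -> last_error q = last_error p -> q = p) /\
  (* VP3 *) (forall p, straight_path (S n) p ->
               exists c, straight_circuit (2 * n) c /\
                 path_in (circ_vert c) (circ_edge c) (S n) p).

Definition root (n : nat) (r : list V) : Prop := straight_path n r.

Definition opposite (n : nat) (x y : V) : Prop :=
  exists r, root n r /\ hd_error r = Some x /\ last_error r = Some y.

End Veldkamp.
Arguments veldkamp_ngon {V}.
Arguments root {V}.
Arguments opposite {V}.

(* Existence.  Start from a root r from x to y with penultimate vertex w.  By
   2-plumpness of the opposition at y there is c0 in Γ_y opposite both w and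
   z.  Appending c0 to r gives a straight (n+1)-path, which by (VP3) lies in a
   straight 2n-circuit; walking around that circuit the other way yields a
   root from x to y with penultimate vertex c0 ([reroute_penultimate]).
   Repeating the argument with z (opposite c0 at y) gives the required root.

   A closed path c of length N is
   parametrised cyclically by Z ([cyc]); using (VP2) on two arcs of the circuit
   one shows that its vertices c_0, ..., c_(N-1) are pairwise distinct, so
   every path in the circuit runs monotonically around it and the
   complementary arc of an (n+1)-path is again a path in the circuit, hence
   straight ([circuit_reverse]).

   Uniqueness.  Two such roots agree after deleting y; their prefixes are
   straight (n-1)-paths with the same end points, equal by (VP2). *)

From Stdlib Require Import List Arith Lia ZArith.
Import ListNotations.

Lemma chain_in_nth {V} (E : V -> V -> Prop) (l : list V) :
  chain_in V E l <-> forall d i, S i < length l -> E (nth i l d) (nth (S i) l d).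
Proof.
  induction l as [|a [|b t] IH]; simpl.
  - split; [intros _ d i H; lia | auto].
  - split; [intros _ d i H; lia | auto].
  - split.
    + intros [H1 H2] d [|i] Hi; [exact H1|]. apply (proj1 IH H2); simpl in *; lia.
    + intros H. split; [apply (H a 0); lia|].
      apply IH. intros d i Hi. apply (H d (S i)); simpl in *; lia.
Qed.

Lemma no_backtrack_nth {V} (l : list V) :
  no_backtrack V l <-> forall d i, S (S i) < length l -> nth i l d <> nth (S (S i)) l d.
Proof.
  induction l as [|a [|b [|c t]] IH]; simpl.
  1-3: split; [intros _ d i H; simpl in H; lia | auto].
  split.
  - intros [H1 H2] d [|i] Hi; [exact H1|]. apply (proj1 IH H2); simpl in *; lia.
  - intros H. split; [apply (H a 0); simpl; lia|].
    apply IH. intros d i Hi. apply (H d (S i)); simpl in *; lia.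
Qed.

Lemma straight_seq_nth {V} (opp : V -> V -> V -> Prop) (l : list V) :
  straight_seq V opp l <->
  forall d i, S (S i) < length l -> opp (nth (S i) l d) (nth i l d) (nth (S (S i)) l d).
Proof.
  induction l as [|a [|b [|c t]] IH]; simpl.
  1-3: split; [intros _ d i H; simpl in H; lia | auto].
  split.
  - intros [H1 H2] d [|i] Hi; [exact H1|]. apply (proj1 IH H2); simpl in *; lia.
  - intros H. split; [apply (H a 0); simpl; lia|].
    apply IH. intros d i Hi. apply (H d (S i)); simpl in *; lia.
Qed.

Lemma hd_error_nth {V} (l : list V) d : l <> [] -> hd_error l = Some (nth 0 l d).
Proof. destruct l; simpl; congruence. Qed.

Lemma last_error_nth {V} (l : list V) d :
  l <> [] -> last_error l = Some (nth (pred (length l)) l d).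
Proof.
  destruct l as [|a t]; [congruence|]. intros _. simpl. f_equal.
  revert a; induction t as [|b t IH]; intros a; simpl; auto.
  rewrite IH. destruct t; simpl; auto.
Qed.

Lemma nth_snoc_lt {V} (l : list V) e d i : i < length l -> nth i (l ++ [e]) d = nth i l d.
Proof. intros; apply app_nth1; auto. Qed.

Lemma nth_snoc_last {V} (l : list V) e d : nth (length l) (l ++ [e]) d = e.
Proof. rewrite app_nth2 by lia. rewrite Nat.sub_diag. reflexivity. Qed.

Lemma last_error_snoc {V} (l : list V) a : last_error (l ++ [a]) = Some a.
Proof.
  rewrite (last_error_nth _ a) by (destruct l; discriminate).
  rewrite length_app. simpl. replace (pred (length l + 1)) with (length l) by lia.
  apply f_equal, nth_snoc_last.
Qed.

Lemma split_first_last_two {V} (q : list V) m d :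
  length q = S (S (S m)) -> exists l, q = nth 0 q d :: l ++ [nth (S m) q d; nth (S (S m)) q d].
Proof.
  intros H. destruct q as [|a q']; [discriminate|]. simpl in H |- *.
  destruct (exists_last (l:=q')) as [q1 [c ->]]; [intros ->; discriminate|].
  rewrite length_app in H; simpl in H.
  destruct (exists_last (l:=q1)) as [q2 [b ->]]; [intros ->; simpl in H; discriminate|].
  rewrite length_app in H; simpl in H.
  exists q2. f_equal. rewrite <- app_assoc. simpl. f_equal.
  rewrite !app_nth2 by lia. replace (m - length q2) with 0 by lia.
  replace (S m - length q2) with 1 by lia. reflexivity.
Qed.

Lemma straight_path_prefix {V} adj opp m (l : list V) a :
  straight_path V adj opp (S m) (l ++ [a]) -> straight_path V adj opp m l.
Proof.
  intros [[Hl [_ [Hc Hn]]] Hs].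
  rewrite length_app in Hl; simpl in Hl.
  rewrite chain_in_nth in Hc. rewrite no_backtrack_nth in Hn. rewrite straight_seq_nth in Hs.
  split; [split; [lia|split; [auto|split]]|].
  - apply chain_in_nth. intros d i Hi.
    specialize (Hc d i). rewrite !nth_snoc_lt in Hc by lia. apply Hc. rewrite length_app; simpl; lia.
  - apply no_backtrack_nth. intros d i Hi.
    specialize (Hn d i). rewrite !nth_snoc_lt in Hn by lia. apply Hn. rewrite length_app; simpl; lia.
  - apply straight_seq_nth. intros d i Hi.
    specialize (Hs d i). rewrite !nth_snoc_lt in Hs by lia. apply Hs. rewrite length_app; simpl; lia.
Qed.

Lemma straight_path_snoc {V} adj opp m (l : list V) e d :
  straight_path V adj opp m l -> 1 <= m ->
  adj (nth m l d) e -> opp (nth m l d) (nth (m-1) l d) e -> nth (m-1) l d <> e ->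
  straight_path V adj opp (S m) (l ++ [e]).
Proof.
  intros [[Hl [_ [Hc Hn]]] Hs] Hm Ha Ho Hne.
  rewrite chain_in_nth in Hc. rewrite no_backtrack_nth in Hn. rewrite straight_seq_nth in Hs.
  assert (Hlen : length (l ++ [e]) = S (S m)) by (rewrite length_app; simpl; lia).
  assert (Hlast : nth (S m) (l ++ [e]) d = e) by (rewrite <- Hl; apply nth_snoc_last).
  split; [split; [exact Hlen|split; [auto|split]]|].
  - apply chain_in_nth. intros d' i Hi.
    rewrite !(nth_indep _ d' d) by lia.
    destruct (Nat.eq_dec i m) as [->|]; rewrite (nth_snoc_lt l) by lia.
    + rewrite Hlast. exact Ha.
    + rewrite nth_snoc_lt by lia. apply Hc. lia.
  - apply no_backtrack_nth. intros d' i Hi.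
    rewrite !(nth_indep _ d' d) by lia.
    destruct (Nat.eq_dec i (m-1)) as [->|]; rewrite (nth_snoc_lt l) by lia.
    + replace (S (S (m-1))) with (S m) by lia. rewrite Hlast. exact Hne.
    + rewrite nth_snoc_lt by lia. apply Hn. lia.
  - apply straight_seq_nth. intros d' i Hi.
    rewrite !(nth_indep _ d' d) by lia.
    rewrite !(nth_snoc_lt l e d i), (nth_snoc_lt l e d (S i)) by lia.
    destruct (Nat.eq_dec i (m-1)) as [->|].
    + replace (S (S (m-1))) with (S m) by lia. replace (S (m-1)) with m by lia.
      rewrite Hlast. exact Ho.
    + rewrite nth_snoc_lt by lia. apply Hs. lia.
Qed.
Open Scope Z_scope.

Section CyclicCircuit.
Variables (V : Type) (adj : V -> V -> Prop) (opp : V -> V -> V -> Prop).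
Variables (c : list V) (N : nat) (d : V).
Hypotheses (HN : (4 <= N)%nat) (Hlen : length c = S N) (Hclosed : nth 0 c d = nth N c d)
  (Hsym : forall x y, adj x y -> adj y x) (Hirr : forall x, ~ adj x x) (Hchain : chain_in V adj c) (Hnb : no_backtrack V c)
  (Hst : forall k l, path_in V (circ_vert V c) (circ_edge V c) k l -> straight_seq V opp l).

Definition cyc (z : Z) : V := nth (Z.to_nat (z mod Z.of_nat N)) c d.

Lemma cyc_index z : 0 <= z <= Z.of_nat N -> cyc z = nth (Z.to_nat z) c d.
Proof.
  intros Hz. unfold cyc. destruct (Z.eq_dec z (Z.of_nat N)) as [->|Hne].
  - rewrite Z.mod_same by lia. rewrite Nat2Z.id. exact Hclosed.
  - rewrite Z.mod_small by lia. reflexivity.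
Qed.

Lemma cyc_period z t : cyc (z + t * Z.of_nat N) = cyc z.
Proof. unfold cyc. rewrite Z.mod_add by lia. reflexivity. Qed.

Lemma cyc_repr z : exists r t, 0 <= r < Z.of_nat N /\ z = r + t * Z.of_nat N.
Proof.
  exists (z mod Z.of_nat N), (z / Z.of_nat N).
  pose proof (Z.mod_pos_bound z (Z.of_nat N) ltac:(lia)).
  pose proof (Z.div_mod z (Z.of_nat N) ltac:(lia)). lia.
Qed.

Lemma cyc_in z : In (cyc z) c.
Proof. unfold cyc. apply nth_In. pose proof (Z.mod_pos_bound z (Z.of_nat N)). lia. Qed.

Lemma circ_edge_sym u v : circ_edge V c u v -> circ_edge V c v u.
Proof. intros [i [Hi [H|H]]]; exists i; split; auto; tauto. Qed.

Lemma circ_edge_adj u v : circ_edge V c u v -> adj u v.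
Proof.
  intros [i [Hi H]]. rewrite chain_in_nth in Hchain. specialize (Hchain d i Hi).
  destruct H as [[H1 H2]|[H1 H2]];
  apply (nth_error_nth _ _ d) in H1; apply (nth_error_nth _ _ d) in H2; subst; auto.
Qed.

Lemma cyc_edge z : circ_edge V c (cyc z) (cyc (z+1)).
Proof.
  destruct (cyc_repr z) as [r [t [Hr ->]]].
  replace (r + t * Z.of_nat N + 1) with ((r + 1) + t * Z.of_nat N) by lia.
  rewrite !cyc_period, !cyc_index by lia.
  replace (Z.to_nat (r + 1)) with (S (Z.to_nat r)) by lia.
  exists (Z.to_nat r). split; [lia|]. left.
  split; apply nth_error_nth'; lia.
Qed.

Lemma circ_edge_cyc u v :
  circ_edge V c u v -> exists k, (cyc k = u /\ cyc (k+1) = v) \/ (cyc k = v /\ cyc (k+1) = u).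
Proof.
  intros [i [Hi H]]. exists (Z.of_nat i).
  rewrite !cyc_index by lia. rewrite Nat2Z.id.
  replace (Z.to_nat (Z.of_nat i + 1)) with (S i) by lia.
  destruct H as [[H1 H2]|[H1 H2]];
  apply (nth_error_nth _ _ d) in H1; apply (nth_error_nth _ _ d) in H2; auto.
Qed.

Lemma cyc_no_backtrack z : 0 <= z -> z + 2 <= Z.of_nat N -> cyc z <> cyc (z + 2).
Proof.
  intros Hz Hz2. rewrite !cyc_index by lia.
  replace (Z.to_nat (z + 2)) with (S (S (Z.to_nat z))) by lia.
  apply (proj1 (no_backtrack_nth _) Hnb). lia.
Qed.

Definition arc (a dd : Z) (s : nat) : list V :=
  map (fun i => cyc (a + dd * Z.of_nat i)) (seq 0 (S s)).

Lemma arc_length a dd s : length (arc a dd s) = S s.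
Proof. unfold arc. rewrite length_map, length_seq. reflexivity. Qed.

Lemma arc_nth a dd s i d' : (i <= s)%nat -> nth i (arc a dd s) d' = cyc (a + dd * Z.of_nat i).
Proof.
  intros Hi. unfold arc. set (g := fun i : nat => cyc (a + dd * Z.of_nat i)).
  rewrite (nth_indep _ d' (g 0%nat)) by (rewrite length_map, length_seq; lia).
  rewrite map_nth, seq_nth by lia. reflexivity.
Qed.

Lemma arc_hd a dd s : hd_error (arc a dd s) = Some (cyc a).
Proof. simpl. do 2 f_equal. lia. Qed.

Lemma arc_last a dd s : last_error (arc a dd s) = Some (cyc (a + dd * Z.of_nat s)).
Proof.
  rewrite (last_error_nth _ d) by (intro E; apply (f_equal (@length V)) in E;
    rewrite arc_length in E; discriminate).
  rewrite arc_length, arc_nth by lia. reflexivity.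
Qed.

(* An arc which does not backtrack is a path in the circuit, hence straight. *)
Lemma arc_straight a dd s : (dd = 1 \/ dd = -1) ->
  (forall i, (S (S i) <= s)%nat -> cyc (a + dd * Z.of_nat i) <> cyc (a + dd * Z.of_nat (S (S i)))) ->
  straight_path V adj opp s (arc a dd s).
Proof.
  intros Hdd Hnba.
  assert (Hce : chain_in V (circ_edge V c) (arc a dd s)).
  { apply chain_in_nth. intros d' i Hi. rewrite arc_length in Hi. rewrite !arc_nth by lia.
    destruct Hdd as [->| ->].
    - replace (a + 1 * Z.of_nat (S i)) with ((a + 1 * Z.of_nat i) + 1) by lia. apply cyc_edge.
    - apply circ_edge_sym.
      replace (a + -1 * Z.of_nat i) with ((a + -1 * Z.of_nat (S i)) + 1) by lia. apply cyc_edge. }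
  assert (Hnbl : no_backtrack V (arc a dd s)).
  { apply no_backtrack_nth. intros d' i Hi. rewrite arc_length in Hi.
    rewrite !arc_nth by lia. apply Hnba. lia. }
  assert (Hin : forall x, In x (arc a dd s) -> circ_vert V c x).
  { intros x Hx. unfold arc in Hx. apply in_map_iff in Hx. destruct Hx as [i [<- _]]. apply cyc_in. }
  split; [|apply (Hst s); repeat split; auto using arc_length].
  repeat split; auto using arc_length.
  apply chain_in_nth. rewrite chain_in_nth in Hce. intros d' i Hi. apply circ_edge_adj, Hce, Hi.
Qed.

Variable n : nat.
Hypotheses (HNn : N = (2*n)%nat)
  (VP2 : forall k, (1 <= k <= n - 1)%nat -> forall p, straight_path V adj opp k p ->
    forall j q, (j <= k)%nat -> straight_path V adj opp j q ->
    hd_error q = hd_error p -> last_error q = last_error p -> q = p).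

(* The vertices c_0, ..., c_(N-1) are pairwise distinct: otherwise the two
   arcs of nearly equal length between two equal vertices would contradict
   (VP2) or the absence of backtracking. *)
Lemma cyc_distinct a b : 0 <= a < b -> b < Z.of_nat N -> cyc a <> cyc b.
Proof.
  intros Hab HbN Heq.
  destruct (Z.eq_dec (b - a) 1) as [E1|E1].
  { apply (Hirr (cyc a)), circ_edge_adj. rewrite Heq at 2.
    replace b with (a + 1) by lia. apply cyc_edge. }
  destruct (Z.eq_dec (b - a) (Z.of_nat N - 1)) as [E2|E2].
  { apply (Hirr (cyc b)), circ_edge_adj.
    replace (cyc b) with (cyc (b + 1)) at 2; [apply cyc_edge|].
    replace (b + 1) with (a + 1 * Z.of_nat N) by lia. rewrite cyc_period. exact Heq. }
  set (t := Z.to_nat ((b - a) / 2)). set (s := (Z.to_nat (b - a) - t)%nat).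
  assert (Hts : (1 <= t <= s /\ s <= n - 1)%nat) by (unfold s, t; Z.div_mod_to_equations; lia).
  assert (H1 : straight_path V adj opp t (arc a 1 t)).
  { apply arc_straight; [left; reflexivity|]. intros k Hk.
    replace (a + 1 * Z.of_nat (S (S k))) with ((a + 1 * Z.of_nat k) + 2) by lia.
    apply cyc_no_backtrack; lia. }
  assert (H2 : straight_path V adj opp s (arc b (-1) s)).
  { apply arc_straight; [right; reflexivity|]. intros k Hk.
    replace (b + -1 * Z.of_nat k) with ((b + -1 * Z.of_nat (S (S k))) + 2) by lia.
    intro E. symmetry in E. revert E. apply cyc_no_backtrack; lia. }
  assert (Harcs : arc a 1 t = arc b (-1) s).
  { apply (VP2 s ltac:(lia) _ H2 t _ ltac:(lia) H1).
    - rewrite !arc_hd, Heq. reflexivity.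
    - rewrite !arc_last. do 2 f_equal. lia. }
  assert (Hst' : t = s).
  { apply (f_equal (@length V)) in Harcs. rewrite !arc_length in Harcs. lia. }
  assert (Hmid : nth (t - 1) (arc a 1 t) d = nth (t - 1) (arc b (-1) s) d) by (rewrite Harcs; reflexivity).
  rewrite !arc_nth in Hmid by lia.
  replace (b + -1 * Z.of_nat (t - 1)) with ((a + 1 * Z.of_nat (t - 1)) + 2) in Hmid by lia.
  revert Hmid. apply cyc_no_backtrack; lia.
Qed.

Lemma cyc_inj a b : cyc a = cyc b -> exists t, a = b + t * Z.of_nat N.
Proof.
  intros E. destruct (cyc_repr a) as [ra [ta [Hra ->]]]. destruct (cyc_repr b) as [rb [tb [Hrb ->]]].
  rewrite !cyc_period in E.
  assert (ra = rb).
  { destruct (Z.lt_total ra rb) as [Hl|[Hl|Hl]]; auto; exfalso.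
    - apply (cyc_distinct ra rb); [lia|lia|exact E].
    - apply (cyc_distinct rb ra); [lia|lia|congruence]. }
  subst rb. exists (ta - tb). ring.
Qed.

Lemma cyc_gap2 z w : w = z + 2 \/ z = w + 2 -> cyc z <> cyc w.
Proof.
  intros Hzw E. destruct (cyc_inj _ _ E) as [t Ht].
  assert (Z.of_nat N >= 4) by lia.
  destruct (Z.lt_trichotomy t 0) as [Tt|[->|Tt]]; nia.
Qed.

Lemma circ_neighbours b v : circ_edge V c (cyc b) v -> v = cyc (b+1) \/ v = cyc (b-1).
Proof.
  intros H. destruct (circ_edge_cyc _ _ H) as [k [[E1 E2]|[E1 E2]]].
  - destruct (cyc_inj _ _ E1) as [t Ht]. left. rewrite <- E2.
    replace (k+1) with ((b+1) + t * Z.of_nat N) by lia. apply cyc_period.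
  - symmetry in E2. destruct (cyc_inj _ _ E2) as [t Ht]. right. rewrite <- E1.
    replace k with ((b-1) + (-t) * Z.of_nat N) by lia. apply cyc_period.
Qed.

Lemma circ_path_monotone l s a dd : (dd = 1 \/ dd = -1) ->
  path_in V (circ_vert V c) (circ_edge V c) s l -> (1 <= s)%nat ->
  nth 0 l d = cyc a -> nth 1 l d = cyc (a + dd) ->
  forall i, (i <= s)%nat -> nth i l d = cyc (a + dd * Z.of_nat i).
Proof.
  intros Hdd [Hl [_ [Hc Hn]]] Hs H0 H1.
  rewrite chain_in_nth in Hc. rewrite no_backtrack_nth in Hn.
  assert (Hstep : forall i, (S i <= s)%nat ->
    nth i l d = cyc (a + dd * Z.of_nat i) /\ nth (S i) l d = cyc (a + dd * Z.of_nat (S i))).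
  { induction i as [|i IH]; intros Hi.
    - split; [rewrite H0|rewrite H1]; f_equal; lia.
    - destruct (IH ltac:(lia)) as [A B]. split; auto.
      pose proof (Hc d (S i) ltac:(lia)) as E. rewrite B in E.
      destruct (circ_neighbours _ _ E) as [F|F]; destruct Hdd as [-> | ->];
        try (exfalso; apply (Hn d i ltac:(lia)); rewrite A, F; f_equal; lia);
        rewrite F; f_equal; lia. }
  intros [|i] Hi; [rewrite H0; f_equal; lia|]. apply Hstep. lia.
Qed.

Lemma circuit_reverse p : path_in V (circ_vert V c) (circ_edge V c) (S n) p ->
  exists q, straight_path V adj opp n q /\ nth 0 q d = nth 0 p d /\
    nth (n-1) q d = nth (S n) p d /\ nth n q d = nth n p d.
Proof.
  intros HP.
  assert (Hstart : exists a dd, (dd = 1 \/ dd = -1) /\ nth 0 p d = cyc a /\ nth 1 p d = cyc (a + dd)).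
  { destruct HP as [Hl [_ [Hc _]]]. rewrite chain_in_nth in Hc.
    destruct (circ_edge_cyc _ _ (Hc d 0%nat ltac:(lia))) as [k [[E1 E2]|[E1 E2]]].
    - exists k, 1. auto.
    - exists (k+1), (-1). split; auto. split; auto. rewrite <- E1. f_equal. lia. }
  destruct Hstart as [a [dd [Hdd [E0 E1]]]].
  pose proof (circ_path_monotone p (S n) a dd Hdd HP ltac:(lia) E0 E1) as W.
  exists (arc a (-dd) n). split.
  - apply arc_straight; [destruct Hdd; [right|left]; lia|]. intros k Hk.
    apply cyc_gap2. destruct Hdd; subst dd; lia.
  - rewrite !arc_nth, !W by lia. split; [f_equal; lia|split].
    + rewrite <- (cyc_period (a + dd * Z.of_nat (S n)) (-dd)). f_equal.
      rewrite HNn. destruct Hdd; subst dd; lia.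
    + rewrite <- (cyc_period (a + dd * Z.of_nat n) (-dd)). f_equal.
      rewrite HNn. destruct Hdd; subst dd; lia.
Qed.

End CyclicCircuit.
Close Scope Z_scope.

Section VeldkampNgon.
Variables (V : Type) (adj : V -> V -> Prop) (opp : V -> V -> V -> Prop) (n : nat).
Hypothesis hG : veldkamp_ngon adj opp n.

(* (VP3) + [circuit_reverse]: a straight (n+1)-path p yields a root from p_0
   to p_n with penultimate vertex p_(n+1). *)
Lemma root_from_long_path p d : straight_path V adj opp (S n) p ->
  exists q, root adj opp n q /\ nth 0 q d = nth 0 p d /\
    nth (n-1) q d = nth (S n) p d /\ nth n q d = nth n p d.
Proof.
  intros Hp.
  destruct hG as [Hn [[[Hsym Hirr] _] [_ [_ [VP2 VP3]]]]].
  destruct (VP3 p Hp) as [c [[[_ [[Hl [_ [Hch Hnb]]] Hends]] Hst] HP]].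
  assert (Hclosed : nth 0 c d = nth (2*n) c d).
  { rewrite (hd_error_nth _ d), (last_error_nth _ d), Hl in Hends
      by (intros ->; discriminate).
    simpl in Hends. replace (n + (n + 0)) with (2*n) in Hends by lia. congruence. }
  apply (circuit_reverse V adj opp c (2*n) d); auto; lia.
Qed.

Lemma reroute_penultimate q e d :
  root adj opp n q -> opp (nth n q d) (nth (n-1) q d) e ->
  exists q', root adj opp n q' /\ nth 0 q' d = nth 0 q d /\
    nth (n-1) q' d = e /\ nth n q' d = nth n q d.
Proof.
  intros Hq He.
  destruct hG as [Hn [[_ Hv] _]].
  destruct (Hv (nth n q d)) as [[Hopp_adj [Hopp_sym Hopp_irr]] _].
  assert (Hlen : length q = S n) by apply Hq.
  assert (Hext : straight_path V adj opp (S n) (q ++ [e])).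
  { apply (straight_path_snoc adj opp n q e d); auto; try lia.
    - apply (Hopp_adj _ _ He).
    - intros E. rewrite E in He. exact (Hopp_irr e He). }
  destruct (root_from_long_path _ d Hext) as [q' [Hq' [E0 [E1 E2]]]].
  exists q'. rewrite <- Hlen, nth_snoc_last in E1.
  rewrite nth_snoc_lt in E0, E2 by lia. auto.
Qed.

Lemma root_determined x z y l l' :
  root adj opp n (x :: l ++ [z; y]) -> root adj opp n (x :: l' ++ [z; y]) -> l = l'.
Proof.
  intros Hr Hr'.
  destruct hG as [Hn [_ [_ [_ [VP2 _]]]]].
  assert (Hprefix : forall l0, root adj opp n (x :: l0 ++ [z; y]) ->
            straight_path V adj opp (n-1) ((x :: l0) ++ [z])).
  { intros l0 H. apply (straight_path_prefix adj opp (n-1) _ y).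
    replace (S (n-1)) with n by lia. rewrite <- app_assoc. exact H. }
  assert (E : (x :: l') ++ [z] = (x :: l) ++ [z]).
  { apply (VP2 (n-1) ltac:(lia) _ (Hprefix l Hr) (n-1) _ (le_n _) (Hprefix l' Hr')).
    - reflexivity.
    - rewrite !last_error_snoc. reflexivity. }
  apply app_inj_tail in E. destruct E as [E _]. injection E. auto.
Qed.

Lemma root_of_opposite x y d : opposite adj opp n x y ->
  exists r, root adj opp n r /\ nth 0 r d = x /\ nth n r d = y.
Proof.
  intros [r [Hr [Hhd Hlast]]]. exists r. split; [exact Hr|].
  assert (Hlen : length r = S n) by apply Hr.
  rewrite (hd_error_nth _ d) in Hhd by (intros ->; discriminate).
  rewrite (last_error_nth _ d), Hlen in Hlast by (intros ->; discriminate).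
  simpl in Hlast. split; congruence.
Qed.

Lemma root_last_adj q d : root adj opp n q -> adj (nth n q d) (nth (n-1) q d).
Proof.
  intros [[Hlen [_ [Hc _]]] _].
  destruct hG as [Hn [[[Hsym _] _] _]]. rewrite chain_in_nth in Hc.
  apply Hsym. pose proof (Hc d (n-1) ltac:(lia)) as H.
  replace (S (n-1)) with n in H by lia. exact H.
Qed.

Lemma root_shape q d : root adj opp n q ->
  exists l, q = nth 0 q d :: l ++ [nth (n-1) q d; nth n q d].
Proof.
  intros [[Hlen _] _]. destruct hG as [Hn _].
  destruct (split_first_last_two q (n-2) d ltac:(lia)) as [l Hl].
  exists l. replace (n-1) with (S (n-2)) by lia. replace n with (S (S (n-2))) at 2 by lia.
  exact Hl.
Qed.

End VeldkampNgon.

Theorem proposition2p10 (V : Type) (adj : V -> V -> Prop) (opp : V -> V -> V -> Prop)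
  (n : nat) (hn : 2 <= n) (hG : veldkamp_ngon adj opp n)
  (x y z : V) (hxy : opposite adj opp n x y) (hz : adj y z) :
  exists! r : list V, root adj opp n r /\
    exists l : list V, r = x :: l ++ [z; y].
Proof.
  destruct (root_of_opposite V adj opp n x y x hxy) as [r [Hr [Hx Hy]]].
  (* a common opposite c0, in Γ_y, of z and of the penultimate vertex of r *)
  pose proof hG as [_ [[_ Hv] _]].
  destruct (Hv y) as [[_ [Hopp_sym _]] Hplump].
  destruct (Hplump [nth (n-1) r x; z]) as [c0 [_ Hc0]]; [simpl; lia| |].
  { intros s [<-|[<-|[]]]; [rewrite <- Hy; exact (root_last_adj V adj opp n hG r x Hr)|exact hz]. }
  (* reroute the root through c0, then through z *)
  destruct (reroute_penultimate V adj opp n hG r c0 x Hr) as [q1 [Hq1 [A0 [A1 A2]]]].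
  { rewrite Hy. apply Hopp_sym, Hc0. simpl; auto. }
  destruct (reroute_penultimate V adj opp n hG q1 z x Hq1) as [q2 [Hq2 [B0 [B1 B2]]]].
  { rewrite A2, Hy, A1. apply Hc0. simpl; auto. }
  destruct (root_shape V adj opp n hG q2 x Hq2) as [l Hl].
  rewrite B0, A0, Hx, B1, B2, A2, Hy in Hl.
  exists q2. split; [split; [exact Hq2|exists l; exact Hl]|].
  intros r' [Hr' [l' ->]]. subst q2.
  rewrite (root_determined V adj opp n hG x z y l l' Hq2 Hr'). reflexivity.
Qed.
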